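(* Let $p$ be a prime with $p\equiv 5\pmod 6$, and regard $r$ as an indeterminate. Let $c_1(r)$ and $c_2(r)$ be the coefficients of $x^{p-2}y^{p-1}z^{2p-1}$ and $x^{2p-1}y^{p-1}z^{p-2}$ in $(x^3z+y^4+ry^2z^2+z^4)^{p-1}$, viewed as polynomials in $r$ over $\mathbb F_p$, and let $d_1(r)$ (resp. $d_2(r)$) be the coefficient of $y^{p-1}$ in $(y^4+ry^2+1)^{(2p-1)/3}$ (resp. $(y^4+ry^2+1)^{(p-2)/3}$), so that $d_1(r)=\binom{p-1}{(p-2)/3}c_1(r)$ and $d_2(r)=\binom{p-1}{(p-2)/3}c_2(r)$. Then: \begin{enumerate} \item If $p\equiv 5\pmod{12}$, $d_2(r)$ is a polynomial in $r^2$ with nonzero constant term. If $p\equiv 11\pmod{12}$, $d_2(r)$ is divisible by $r$ and $d_2(r)/r$ is a polynomial in $r^2$ with nonzero constant term. \item Writing $r=\alpha+\beta$ with $\alpha\beta=1$, one has \[d_1(r)=(\alpha\beta)^{(p+1)/6}\sum_{i+j=(p-1)/2}\binom{(2p-1)/3}{i}\binom{(2p-1)/3}{j}\alpha^i\beta^j,\qquad d_2(r)=\sum_{i+j=(p-5)/6}\binom{(p-2)/3}{i}\binom{(p-2)/3}{j}\alpha^i\beta^j,\] where the two sums (i.e. $(\alpha\beta)^{-(p+1)/6}d_1(r)$ and $d_2(r)$, as polynomials in $\alpha,\beta$) are not divisible by $\alpha\beta$. Hence $\deg_r c_1=\deg_r d_1=(p-1)/2$ and $\deg_r c_2=\deg_r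 d_2=(p-5)/6$. \item Modulo $p$, the polynomial $c_1(r)$ (resp. $d_1(r)$) is divisible by $c_2(r)$ (resp. $d_2(r)$). \end{enumerate} *)

From mathcomp Require Import all_boot all_order all_algebra.
Set Implicit Arguments. Unset Strict Implicit. Unset Printing Implicit Defensive.
Import GRing.Theory.
Local Open Scope ring_scope.

Definition quartic (p : nat) : {poly {poly {poly {poly 'F_p}}}} :=
  let x : {poly {poly {poly {poly 'F_p}}}} := 'X in
  let y : {poly {poly {poly {poly 'F_p}}}} := ('X)%:P in
  let z : {poly {poly {poly {poly 'F_p}}}} := ('X)%:P%:P in
  let r : {poly {poly {poly {poly 'F_p}}}} := ('X)%:P%:P%:P in
  x ^+ 3 * z + y ^+ 4 + r * y ^+ 2 * z ^+ 2 + z ^+ 4.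

Definition coef_xyz (p a b c : nat) (P : {poly {poly {poly {poly 'F_p}}}})
  : {poly 'F_p} := ((P`_a)`_b)`_c.

Definition c1 (p : nat) : {poly 'F_p} :=
  coef_xyz (p - 2) (p - 1) (2 * p - 1) (quartic p ^+ (p - 1)).
Definition c2 (p : nat) : {poly 'F_p} :=
  coef_xyz (2 * p - 1) (p - 1) (p - 2) (quartic p ^+ (p - 1)).

Definition yquartic (p : nat) : {poly {poly 'F_p}} :=
  'X ^+ 4 + ('X)%:P * 'X ^+ 2 + 1.

Definition d1 (p : nat) : {poly 'F_p} :=
  (yquartic p ^+ ((2 * p - 1) %/ 3))`_(p - 1).
Definition d2 (p : nat) : {poly 'F_p} :=
  (yquartic p ^+ ((p - 2) %/ 3))`_(p - 1).

Definition bsum (R : nzRingType) (N m : nat) (a b : R) : R :=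
  \sum_(i < m.+1) ('C(N, i) * 'C(N, m - i))%:R * a ^+ i * b ^+ (m - i).

From HB Require Import structures.
From mathcomp Require Import all_boot all_order all_algebra.
From mathcomp Require Import ring zify.

(* Put G = y^2 + r y + 1.  Expanding in x^3 z and using the homogeneity of
   y^4 + r y^2 z^2 + z^4 in (y^2, z^2), each c_i is C(p - 1, k) times the
   corresponding d_i, a coefficient of a power of G, and C(p - 1, k) = (-1)^k
   mod p.  The coefficient of y^h in G^N is a Gegenbauer polynomial in r, killed
   by [gegenbauer_op N h].  Factoring G = (y + a)(y + b) with ab = 1 gives the
   binomial sums of part 2, and the exponents of r occurring in it all have the
   parity of h, which gives part 1.  For part 3, conjugating by
   (r^2 - 4)^((p + 1)/6) turns the operator for N = (p - 2)/3 into the one for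
   N = (2p - 1)/3 up to a multiple of p, so (r^2 - 4)^((p + 1)/6) d2 and d1 lie
   in the same kernel among polynomials of degree at most (p - 1)/2.  That
   kernel is a line, since the operator acts on coefficients by a two-step
   recurrence whose weights are units mod p; hence d2 divides d1. *)

Set Implicit Arguments.
Unset Strict Implicit.
Unset Printing Implicit Defensive.

Import GRing.Theory.
Local Open Scope ring_scope.

Lemma size_poly_top (R : nzSemiRingType) (q : {poly R}) n :
  (size q <= n.+1)%N -> q`_n != 0 -> size q = n.+1.
Proof.
move=> le_q qn_neq0; apply/eqP; rewrite eqn_leq le_q /= ltnNge.
by apply: contra qn_neq0 => /leq_sizeP/(_ n (leqnn n)) ->.
Qed.

Section TrinomialPowers.
Variable R : comNzRingType.

Lemma coef_XaddC_exp (c : R) n j :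
  (('X + c%:P) ^+ n)`_j = 'C(n, j)%:R * c ^+ (n - j).
Proof.
rewrite addrC exprDn (eq_bigr (fun i : 'I_n.+1 => (c ^+ (n - i) *+ 'C(n, i)) *: 'X^i)).
  rewrite coef_sumMXn (big_ord1_eq _ (fun i => c ^+ (n - i) *+ 'C(n, i))) ltnS mulr_natl.
  by case: leqP => // ltnj; rewrite bin_small.
by move=> i _; rewrite -mul_polyC rmorphMn rmorphXn mulrnAl.
Qed.

Lemma coef_XnM_addC_exp (A B : R) m n k : (0 < m)%N -> (k <= n)%N ->
  (('X^m * A%:P + B%:P) ^+ n)`_(m * k) = A ^+ k * B ^+ (n - k) *+ 'C(n, k).
Proof.
move=> m_gt0 le_kn; rewrite addrC exprDn.
rewrite (eq_bigr (fun i : 'I_n.+1 => (B ^+ (n - i) * A ^+ i *+ 'C(n, i)) *: 'X^(m * i))).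
  rewrite coef_sumMXn; under eq_bigl do rewrite eqn_pmul2l //.
  by rewrite (big_ord1_eq _ (fun i => B ^+ (n - i) * A ^+ i *+ 'C(n, i))) ltnS le_kn mulrC.
move=> i _; rewrite -mul_polyC rmorphMn rmorphM !rmorphXn exprMn exprM.
by rewrite -!mulrnAl; ring.
Qed.

(* The terms with 2 i < h, whose exponent i - (h - i) is truncated, vanish
   because C(i, h - i) = 0. *)
Definition trinom_coef (M h : nat) (a b : R) : R :=
  \sum_(i < h.+1) ('C(M, i) * 'C(i, h - i))%:R * a ^+ (i - (h - i)) * b ^+ (M - i).

Lemma coef_trinom_exp (a b : R) M h :
  (('X ^+ 2 + a%:P * 'X + b%:P) ^+ M)`_h = trinom_coef M h a b.
Proof.
have -> : 'X ^+ 2 + a%:P * 'X + b%:P = b%:P + 'X * ('X + a%:P) by ring.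
pose T i := ('C(M, i) * 'C(i, h - i))%:R * a ^+ (i - (h - i)) * b ^+ (M - i).
pose U i := ((b%:P ^+ (M - i) * ('X * ('X + a%:P)) ^+ i) *+ 'C(M, i))`_h.
rewrite exprDn coef_sum /trinom_coef.
rewrite (big_ord_widen (M + h).+1 U) ?ltnS ?leq_addr //.
rewrite [RHS](big_ord_widen (M + h).+1 T) ?ltnS ?leq_addl //.
rewrite big_mkcond [RHS]big_mkcond; apply: eq_bigr => i _; rewrite !ltnS /T /U.
rewrite coefMn -rmorphXn coefCM exprMn coefXnM coef_XaddC_exp.
case: (leqP i M) => iM; case: (leqP i h) => ih /=; rewrite ?(ltnNge h) ?ih ?(ltnW ih) //=.
- by rewrite natrM -mulr_natr; ring.
- by rewrite mulr0 mul0rn.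
- by rewrite bin_small // mul0n !mul0r.
Qed.

Lemma trinom_coef_scale (a b c : R) m h : (h <= 2 * m)%N ->
  trinom_coef m h (a * c) (b * c ^+ 2) = trinom_coef m h a b * c ^+ (2 * m - h).
Proof.
move=> le_h2m; rewrite /trinom_coef big_distrl; apply: eq_bigr => i _ /=.
have [lt_mi|le_im] := ltnP m i; first by rewrite bin_small // !mul0n !mul0r.
have [lt_i|le_i] := ltnP i (h - i); first by rewrite (bin_small lt_i) !muln0 !mul0r.
rewrite !exprMn (_ : 2 * m - h = (i - (h - i)) + (m - i) + (m - i))%N; last first.
  by have := ltn_ord i; lia.
by rewrite !exprD; ring.
Qed.

Lemma trinom_coef_factor (a b : R) N h :
  trinom_coef N h (a + b) (a * b)
  = \sum_(j < h.+1) ('C(N, j) * 'C(N, h - j))%:R * a ^+ (N - j) * b ^+ (N - (h - j)).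
Proof.
rewrite -coef_trinom_exp.
have -> : 'X ^+ 2 + (a + b)%:P * 'X + (a * b)%:P = ('X + a%:P) * ('X + b%:P).
  by rewrite rmorphD rmorphM; ring.
rewrite exprMn coefM; apply: eq_bigr => j _.
by rewrite !coef_XaddC_exp natrM; ring.
Qed.

End TrinomialPowers.

Arguments trinom_coef {R}.

Lemma rmorph_trinom_coef (R S : comNzRingType) (f : {rmorphism R -> S}) a b M h :
  f (trinom_coef M h a b) = trinom_coef M h (f a) (f b).
Proof.
by rewrite rmorph_sum; apply: eq_bigr => i _; rewrite !rmorphM !rmorph_nat !rmorphXn -natrM.
Qed.

Section TrinomialCoefficientsInX.
Variable R : comNzRingType.
Local Notation X := ('X : {poly R}).

Lemma coef_trinom_coef_X M h j :
  (trinom_coef M h X 1)`_j =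
  if ~~ odd (h + j) && (j <= h)%N
  then ('C(M, (h + j)./2) * 'C((h + j)./2, (h - j)./2))%:R else 0.
Proof.
rewrite /trinom_coef coef_sum.
pose T i := ('C(M, i) * 'C(i, h - i))%:R : R.
transitivity (\sum_(i < h.+1 | ~~ odd (h + j) && (i == (h + j)./2 :> nat)) T i).
  rewrite [RHS]big_mkcond; apply: eq_bigr => i _.
  rewrite expr1n mulr1 mulr_natl coefMn coefXn /T.
  have [lt_i|le_i] := ltnP i (h - i).
    by rewrite [C in (_ * C)%N]bin_small // muln0 mulr0n; case: ifP.
  have -> : (j == i - (h - i))%N = ~~ odd (h + j) && (i == (h + j)./2 :> nat).
    apply/eqP/andP => [->|[even_hj /eqP i_eq]].
      rewrite (_ : h + (i - (h - i)) = i.*2)%N ?odd_double ?doubleK //.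
      by rewrite -addnn; have := ltn_ord i; lia.
    move: (odd_double_half (h + j)) (ltn_ord i).
    rewrite (negbTE even_hj) add0n -addnn i_eq.
    by move: (_./2) => k hk hkh; apply/eqP; lia.
  by case: (~~ odd (h + j) && _); rewrite ?mul1rn ?mul0rn.
rewrite (big_ord1_cond_eq _ T (fun _ => ~~ odd (h + j))) ltnS /T andbC.
case: (boolP (~~ odd (h + j))) => //= even_hj.
have := odd_double_half (h + j); rewrite (negbTE even_hj) add0n -addnn.
move: (_./2) => k hk; have [le_jh|lt_hj] := leqP j h; last first.
  by rewrite leqNgt (_ : h < k)%N //; lia.
rewrite (_ : k <= h)%N; last by lia.
by rewrite (_ : h - j = (h - k) + (h - k))%N ?addnn ?doubleK //; lia.
Qed.

Lemma coef_trinom_coef_X_even M h j a : (j <= h)%N -> (h + j = 2 * a)%N ->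
  (trinom_coef M h X 1)`_j = ('C(M, a) * 'C(a, a - j))%:R.
Proof.
move=> le_jh hj2a; rewrite coef_trinom_coef_X le_jh.
rewrite (_ : h + j = a.*2)%N ?odd_double ?doubleK; last by rewrite -addnn; lia.
by rewrite (_ : h - j = (a - j).*2)%N ?doubleK //; rewrite -addnn; lia.
Qed.

Lemma odd_poly_trinom_coef_X M h : ~~ odd h -> odd_poly (trinom_coef M h X 1) = 0.
Proof.
move=> even_h; apply/polyP => i; rewrite coef_odd_poly coef0 coef_trinom_coef_X.
by rewrite addnS oddS oddD odd_double (negbTE even_h).
Qed.

Lemma even_poly_trinom_coef_X M h : odd h -> even_poly (trinom_coef M h X 1) = 0.
Proof.
move=> odd_h; apply/polyP => i; rewrite coef_even_poly coef0 coef_trinom_coef_X.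
by rewrite oddD odd_double odd_h.
Qed.

Lemma size_trinom_coef_X M h :
  (size (trinom_coef M h X 1) <= (minn h (2 * M - h)).+1)%N.
Proof.
apply/leq_sizeP => j lt_j; rewrite coef_trinom_coef_X.
case: ifP => // /andP [even_hj le_jh].
move: (odd_double_half (h + j)); rewrite (negbTE even_hj) add0n -addnn => hj2.
by rewrite bin_small ?mul0n //; move: (_./2) hj2 => k; lia.
Qed.

End TrinomialCoefficientsInX.

Section BinomialPairSums.
Variable R : comNzRingType.
Implicit Types a b : R.

Lemma binom_pair_sum_le a b N h : (h <= N)%N ->
  \sum_(j < h.+1) ('C(N, j) * 'C(N, h - j))%:R * a ^+ (N - j) * b ^+ (N - (h - j))
  = (a * b) ^+ (N - h) * bsum N h a b.
Proof.
move=> le_hN; rewrite /bsum big_distrr [RHS](reindex_inj rev_ord_inj) /=.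
apply: eq_bigr => j _; have lt_jh := ltn_ord j; rewrite subSS.
rewrite (_ : h - (h - j) = j)%N; last by lia.
rewrite (_ : N - j = (N - h) + (h - j))%N; last by lia.
rewrite (_ : N - (h - j) = (N - h) + j)%N; last by lia.
by rewrite !exprD exprMn mulnC; ring.
Qed.

Lemma binom_pair_sum_ge a b N m : (m <= N)%N ->
  \sum_(j < (2 * N - m).+1)
     ('C(N, j) * 'C(N, 2 * N - m - j))%:R * a ^+ (N - j) * b ^+ (N - (2 * N - m - j))
  = bsum N m a b.
Proof.
move=> le_mN.
pose T j := ('C(N, j) * 'C(N, 2 * N - m - j))%:R * a ^+ (N - j)
              * b ^+ (N - (2 * N - m - j)).
rewrite -(big_mkord xpredT T).
rewrite (big_cat_nat (n := N - m)) ?leq0n //=; last by lia.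
rewrite big_nat_cond big1 ?add0r; last first.
  move=> j /andP [/andP [_ lt_j] _].
  by rewrite /T [X in (_ * X)%N]bin_small ?muln0 ?mul0r //; lia.
rewrite (big_cat_nat (n := N.+1)) //=; try lia.
rewrite [X in _ + X]big_nat_cond [X in _ + X]big1 ?addr0; last first.
  by move=> j /andP [/andP [lt_j _] _]; rewrite /T bin_small ?mul0n ?mul0r //; lia.
rewrite -{1}[(N - m)%N]add0n big_addn (_ : N.+1 - (N - m) = m.+1)%N; last by lia.
rewrite big_mkord /bsum [RHS](reindex_inj rev_ord_inj) /=.
apply: eq_bigr => i _; rewrite /T; have lt_im := ltn_ord i; rewrite subSS.
rewrite (_ : m - (m - i) = i)%N; last by lia.
rewrite (_ : N - (i + (N - m)) = m - i)%N; last by lia.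
rewrite (_ : N - (2 * N - m - (i + (N - m))) = i)%N; last by lia.
rewrite (_ : 2 * N - m - (i + (N - m)) = N - i)%N; last by lia.
rewrite bin_sub; last by lia.
rewrite -(bin_sub (n := N) (m := m - i)); last by lia.
rewrite (_ : N - (m - i) = i + (N - m))%N; last by lia.
by rewrite mulnC; ring.
Qed.

Lemma bsum0r N m a : bsum N m a 0 = 'C(N, m)%:R * a ^+ m.
Proof.
rewrite /bsum big_ord_recr /= subnn expr0 mulr1 bin0 muln1 big1 ?add0r // => i _.
by rewrite expr0n subn_eq0 leqNgt ltn_ord mulr0.
Qed.

End BinomialPairSums.

Lemma rmorph_bsum (R S : comNzRingType) (f : {rmorphism R -> S}) N m a b :
  f (bsum N m a b) = bsum N m (f a) (f b).
Proof.
by rewrite rmorph_sum; apply: eq_bigr => i _; rewrite !rmorphM !rmorph_nat !rmorphXn -natrM.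
Qed.

Lemma bsum_ndvdX (R : idomainType) N m (a : R) : 'C(N, m)%:R * a ^+ m != 0 ->
  ~~ (a%:P * 'X %| bsum N m a%:P 'X).
Proof.
move=> nz; apply: contra nz => /(dvdp_trans (dvdp_mulIr _ _)).
rewrite -[X in X %| _]subr0 -polyC0 dvdp_XsubCl /root -horner_evalE rmorph_bsum /=.
by rewrite horner_evalE hornerC horner_evalE hornerX bsum0r.
Qed.

Section Gegenbauer.
Variable R : comNzRingType.

Definition deriv_r (P : {poly {poly R}}) : {poly {poly R}} := map_poly deriv P.

Lemma deriv_rD P Q : deriv_r (P + Q) = deriv_r P + deriv_r Q.
Proof. exact: raddfD. Qed.

Lemma deriv_rMn P n : deriv_r (P *+ n) = deriv_r P *+ n.
Proof. exact: raddfMn. Qed.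

Lemma deriv_rM P Q : deriv_r (P * Q) = deriv_r P * Q + P * deriv_r Q.
Proof.
apply/polyP => n; rewrite coefD !coef_map !coefM /= linear_sum -big_split /=.
by apply: eq_bigr => i _; rewrite derivM !coef_map.
Qed.

Lemma deriv_r_exp P n : deriv_r (P ^+ n.+1) = P ^+ n * deriv_r P *+ n.+1.
Proof.
elim: n => [|n IHn]; first by rewrite expr1 expr0 mul1r.
by rewrite exprS deriv_rM IHn !exprS; ring.
Qed.

Lemma deriv_rC c : deriv_r c%:P = (c^`())%:P.
Proof. exact: map_polyC. Qed.

Lemma deriv_rX : deriv_r 'X = 0.
Proof.
apply/polyP => i; rewrite coef_map coefX coef0.
by case: (i == 1)%N; rewrite ?raddf0 //= -polyC1 derivC.
Qed.

(* Gegenbauer's operator (1 - x^2) D^2 - (2 lambda + 1) x D + h (h + 2 lambda)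
   for lambda = -N, in the variable r = -2x. *)
Definition gegenbauer_op (N h : nat) (f : {poly R}) : {poly R} :=
  (4%:R - 'X ^+ 2) * f^`()^`() + ('X *+ (2 * N) - 'X) * f^`()
  + f *+ (h * h) - f *+ (2 * N * h).

Lemma gegenbauer_op_is_linear N h : linear (gegenbauer_op N h).
Proof. by move=> c f g; rewrite /gegenbauer_op !(derivD, derivZ) -!mul_polyC; ring. Qed.

HB.instance Definition _ N h :=
  GRing.isLinear.Build R {poly R} {poly R} _ (gegenbauer_op N h)
    (gegenbauer_op_is_linear N h).

Lemma coef_gegenbauer_op N h f j : (j <= h)%N -> (h + j <= 2 * N)%N ->
  (gegenbauer_op N h f)`_j
    = f`_j.+2 *+ (4 * (j.+2 * j.+1)) - f`_j *+ ((h - j) * (2 * N - h - j)).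
Proof.
move=> le_jh le_hjN.
rewrite /gegenbauer_op !coefB !coefD !mulrBl !coefB mulr_natl !mulrnAl !coefMn.
rewrite coefXnM !coefXM !coef_deriv.
have -> : ((h - j) * (2 * N - h - j) = j * j + 2 * N * h - (2 * N * j + h * h))%N.
  by nia.
rewrite mulrnBr; last by nia.
case: j {le_jh le_hjN} => [|[|j]] /=; try ring.
by rewrite subSS subn1; ring.
Qed.

Definition euler_op (F : {poly {poly R}}) := 'X * F^`().

Definition gegenbauer_gen_op (N : nat) (F : {poly {poly R}}) :=
  (4%:R - 'X ^+ 2)%:P * deriv_r (deriv_r F) + ('X *+ (2 * N) - 'X)%:P * deriv_r F
  + euler_op (euler_op F) - euler_op F *+ (2 * N).

Lemma coef_euler_op F h : (euler_op F)`_h = F`_h *+ h.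
Proof. by rewrite coefXM coef_deriv; case: h => [|h] //=; rewrite mulr0n. Qed.

Lemma coef_gegenbauer_gen_op N F h :
  (gegenbauer_gen_op N F)`_h = gegenbauer_op N h F`_h.
Proof.
rewrite /gegenbauer_op coefB !coefD !coefCM !coef_map coefMn !coef_euler_op.
by rewrite -!mulrnA (mulnC (2 * N)).
Qed.

Definition gen_trinom : {poly {poly R}} := 'X ^+ 2 + ('X)%:P * 'X + 1.

Lemma gegenbauer_gen_op_trinom N : gegenbauer_gen_op N (gen_trinom ^+ N) = 0.
Proof.
have deriv1 : (1 : {poly R})^`() = 0 := derivC 1.
have dG : deriv_r gen_trinom = 'X.
  rewrite /gen_trinom -[1]polyC1 !deriv_rD !deriv_rM deriv_rX !deriv_rC derivX deriv1.
  by ring.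
have G' : gen_trinom^`() = 'X *+ 2 + ('X)%:P by rewrite /gen_trinom !derivE /=; ring.
have G'' : gen_trinom^`()^`() = 2%:R by rewrite G' !derivE addr0.
rewrite /gegenbauer_gen_op /euler_op.
case: N => [|[|n]].
- by rewrite expr0 -polyC1 !deriv_rC !derivC !(raddf0, mulr0, mul0rn, subr0, addr0).
- by rewrite (expr1 gen_trinom) dG deriv_rX derivM derivX G'' G'; ring.
rewrite !deriv_r_exp dG deriv_rMn deriv_rM deriv_r_exp deriv_rX dG.
rewrite !deriv_exp /= !(derivM, derivX, derivMn, deriv_exp) /= G'' G' !exprS.
by move: (gen_trinom ^+ n) => Gn; rewrite /gen_trinom; ring.
Qed.

Lemma gegenbauer_op_trinom_coef N h : gegenbauer_op N h (trinom_coef N h 'X 1) = 0.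
Proof.
have := congr1 (fun F : {poly {poly R}} => F`_h) (gegenbauer_gen_op_trinom N).
by rewrite /= coef_gegenbauer_gen_op coef0 /gen_trinom -[1]polyC1 coef_trinom_exp.
Qed.

Definition trinom_disc : {poly R} := 'X ^+ 2 - 4%:R.

Lemma trinom_disc_monic : trinom_disc \is monic.
Proof. by rewrite /trinom_disc -polyC_natr monicXnsubC. Qed.

Lemma size_trinom_disc_exp n : size (trinom_disc ^+ n) = (2 * n).+1.
Proof.
elim: n => [|n IHn]; first by rewrite expr0 size_poly1.
rewrite exprS size_monicM ?trinom_disc_monic ?monic_neq0 ?monic_exp ?trinom_disc_monic //.
by rewrite IHn /trinom_disc -polyC_natr size_XnsubC //; lia.
Qed.

(* The choice h = N + k + 1 cancels the multiple of (r^2 - 4)^(k+1) f that the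
   conjugation would otherwise add. *)
Lemma gegenbauer_op_conj N k f :
  gegenbauer_op (N + 2 * k.+1) (N + k.+1) (trinom_disc ^+ k.+1 * f) =
  trinom_disc ^+ k * (trinom_disc * gegenbauer_op N (N + k.+1) f
                      + f *+ (8 * k.+1 * (2 * N + 2 * k + 3))).
Proof.
have disc' : trinom_disc^`() = 'X *+ 2 by rewrite !derivE /= expr1 !addr0 subr0.
rewrite /gegenbauer_op; case: k => [|k].
  rewrite !expr1 expr0 !(derivM, derivD, derivB, derivMn, derivX, disc').
  by rewrite /trinom_disc; ring.
rewrite !(derivMn, deriv_exp, derivM, disc', derivX, derivD, derivB) /=.
rewrite [trinom_disc ^+ k.+2]exprS [trinom_disc ^+ k.+1]exprS.
by move: (trinom_disc ^+ k) => B; rewrite /trinom_disc; ring.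
Qed.

End Gegenbauer.

Arguments trinom_disc {R}.

Section GegenbauerKernel.
Variables (F : fieldType) (N h : nat).
Hypothesis recurrence_unit :
  forall j, (j < h)%N -> ((h - j) * (2 * N - h - j))%:R != 0 :> F.

Lemma gegenbauer_op_eq0 (f : {poly F}) :
  gegenbauer_op N h f = 0 -> (size f <= h.+1)%N -> f`_h = 0 -> f = 0.
Proof.
move=> Lf0 size_f fh0.
suff f_top k : forall j, (h - k <= j)%N -> f`_j = 0.
  by apply/polyP => j; rewrite coef0 (f_top h) ?subnn.
elim: k => [|k IHk] j le_j.
  by have [->|lt_hj] := eqVneq j h; last by apply: (leq_sizeP _ _ size_f); lia.
have [|lt_j] := leqP (h - k) j; first exact: IHk.
have lt_jh : (j < h)%N by lia.
have nz := recurrence_unit lt_jh.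
have le_hjN : (h + j <= 2 * N)%N.
  apply: contraNT nz; rewrite -ltnNge => lt_2N_hj.
  by rewrite (_ : 2 * N - h - j = 0)%N ?muln0 //; lia.
have := congr1 (fun g : {poly F} => g`_j) Lf0.
rewrite /= coef_gegenbauer_op ?(ltnW lt_jh) // IHk; last by lia.
rewrite mul0rn sub0r coef0 => /eqP; rewrite oppr_eq0 -mulr_natr mulf_eq0 (negbTE nz).
by rewrite orbF => /eqP.
Qed.

Lemma gegenbauer_op_kernel (f g : {poly F}) :
  gegenbauer_op N h f = 0 -> gegenbauer_op N h g = 0 ->
  (size f <= h.+1)%N -> (size g <= h.+1)%N -> g`_h != 0 ->
  f = (f`_h / g`_h) *: g.
Proof.
move=> Lf0 Lg0 size_f size_g gh_neq0; apply/eqP; rewrite -subr_eq0; apply/eqP.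
apply: gegenbauer_op_eq0.
- by rewrite linearB linearZ /= Lf0 Lg0 scaler0 subr0.
- rewrite (leq_trans (size_polyD _ _)) // geq_max size_f size_polyN.
  exact: leq_trans (size_scale_leq _ _) size_g.
- by rewrite coefB coefZ divfK // subrr.
Qed.

End GegenbauerKernel.

Section QuarticCoefficients.
Variable R : comNzRingType.
Let r : {poly {poly R}} := ('X)%:P.
Let z : {poly {poly R}} := 'X.
Let V : {poly {poly {poly R}}} := 'X ^+ 2 + (r * z ^+ 2)%:P * 'X + (z ^+ 4)%:P.

Lemma quartic_split :
  let x4 : {poly {poly {poly {poly R}}}} := 'X in
  let y4 : {poly {poly {poly {poly R}}}} := ('X)%:P in
  let z4 : {poly {poly {poly {poly R}}}} := ('X)%:P%:P in
  let r4 : {poly {poly {poly {poly R}}}} := ('X)%:P%:P%:P in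
  x4 ^+ 3 * z4 + y4 ^+ 4 + r4 * y4 ^+ 2 * z4 ^+ 2 + z4 ^+ 4
  = 'X ^+ 3 * z%:P%:P + (V \Po 'X ^+ 2)%:P.
Proof.
rewrite /V /z /r !comp_polyD !comp_polyM !comp_polyC comp_polyX /=.
by rewrite !(polyCD, polyCM, polyC_exp); ring.
Qed.

Lemma coef_quartic_split_exp n k h : (k <= n)%N -> (h <= 2 * (n - k))%N ->
  (((('X ^+ 3 * z%:P%:P + (V \Po 'X ^+ 2)%:P) ^+ n)`_(3 * k))`_(2 * h))
    `_(k + 2 * (2 * (n - k) - h))
  = trinom_coef (n - k) h 'X 1 *+ 'C(n, k).
Proof.
move=> le_kn le_h.
rewrite coef_XnM_addC_exp // coefMn -rmorphXn coefCM -rmorphXn coef_comp_poly_Xn //.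
rewrite dvdn_mulr // mulKn // coef_trinom_exp.
rewrite (_ : z ^+ 4 = 1 * (z ^+ 2) ^+ 2); last by rewrite mul1r -exprM.
rewrite trinom_coef_scale // -polyC1 /r -(rmorph_trinom_coef polyC) -exprM.
by rewrite mulrCA -exprD coefMn coefCM /z coefXn eqxx mulr1.
Qed.

End QuarticCoefficients.

Section PrimeFieldArith.
Variables (p : nat) (p_prime : prime p).

Lemma Fp_natr_neq0 n : (0 < n < p)%N -> n%:R != 0 :> 'F_p.
Proof.
by case/andP=> n_gt0 lt_np; rewrite -(dvdn_pcharf (pchar_Fp p_prime)) gtnNdvd.
Qed.

Lemma Fp_fact_neq0 n : (n < p)%N -> n`!%:R != 0 :> 'F_p.
Proof.
elim: n => [|n IHn] lt_np; first by rewrite fact0 oner_eq0.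
by rewrite factS natrM mulf_neq0 ?IHn ?(ltnW lt_np) ?Fp_natr_neq0 ?lt_np.
Qed.

Lemma Fp_bin_neq0 n k : (n < p)%N -> (k <= n)%N -> 'C(n, k)%:R != 0 :> 'F_p.
Proof.
move=> lt_np le_kn; have := Fp_fact_neq0 lt_np.
by rewrite -(bin_fact le_kn) natrM; apply: contra => /eqP ->; rewrite mul0r.
Qed.

Lemma Fp_bin_predp k : (k < p)%N -> 'C(p.-1, k)%:R = (-1) ^+ k :> 'F_p.
Proof.
elim: k => [|k IHk] lt_kp; first by rewrite bin0.
have p_gt0 := prime_gt0 p_prime.
have predp_sub : (p.-1 - k)%:R = - k.+1%:R :> 'F_p.
  apply/eqP; rewrite -addr_eq0 -natrD (_ : p.-1 - k + k.+1 = p)%N; last by lia.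
  by rewrite pchar_Fp_0.
have := congr1 (fun m => m%:R : 'F_p) (mul_bin_left p.-1 k).
rewrite /= !natrM IHk ?(ltnW lt_kp) // predp_sub exprS => binS.
by apply: (mulfI (@Fp_natr_neq0 k.+1 _)) => //; rewrite binS; ring.
Qed.

Lemma Fp_bsum_ndvdX N m : (m <= N < p)%N ->
  ~~ (('X : {poly 'F_p})%:P * 'X %| bsum N m ('X : {poly 'F_p})%:P 'X).
Proof.
case/andP=> le_mN lt_Np; apply: bsum_ndvdX.
by rewrite mulf_neq0 ?expf_neq0 ?polyX_eq0 // -polyC_natr polyC_eq0 Fp_bin_neq0.
Qed.

End PrimeFieldArith.

Lemma coef_yquartic_exp p N h : (yquartic p ^+ N)`_(2 * h) = trinom_coef N h 'X 1.
Proof.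
have -> : yquartic p = ('X ^+ 2 + ('X)%:P * 'X + 1%:P) \Po 'X ^+ 2.
  by rewrite /yquartic !comp_polyD !comp_polyM !comp_polyC comp_polyX; ring.
by rewrite -rmorphXn coef_comp_poly_Xn // dvdn_mulr // mulKn // coef_trinom_exp.
Qed.

Lemma coef_quartic_exp p n k h : (k <= n)%N -> (h <= 2 * (n - k))%N ->
  coef_xyz (3 * k) (2 * h) (k + 2 * (2 * (n - k) - h)) (quartic p ^+ n)
  = trinom_coef (n - k) h 'X 1 *+ 'C(n, k).
Proof.
move=> le_kn le_h; have split : quartic p = _ := quartic_split 'F_p.
by rewrite /coef_xyz split coef_quartic_split_exp.
Qed.

Section ResidueFiveModSix.
Variable t : nat.
Local Notation p := (6 * t + 5)%N.

Lemma d1E : d1 p = trinom_coef (4 * t + 3) (3 * t + 2) 'X 1.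
Proof.
rewrite /d1 (_ : (2 * p - 1) %/ 3 = 4 * t + 3)%N; last by lia.
by rewrite (_ : p - 1 = 2 * (3 * t + 2))%N ?coef_yquartic_exp; last by lia.
Qed.

Lemma d2E : d2 p = trinom_coef (2 * t + 1) (3 * t + 2) 'X 1.
Proof.
rewrite /d2 (_ : (p - 2) %/ 3 = 2 * t + 1)%N; last by lia.
by rewrite (_ : p - 1 = 2 * (3 * t + 2))%N ?coef_yquartic_exp; last by lia.
Qed.

Lemma c1E : c1 p = d1 p *+ 'C(6 * t + 4, 2 * t + 1).
Proof.
rewrite /c1 d1E (_ : p - 2 = 3 * (2 * t + 1))%N; last by lia.
rewrite {1}(_ : p - 1 = 2 * (3 * t + 2))%N; last by lia.
rewrite (_ : p - 1 = 6 * t + 4)%N; last by lia.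
rewrite (_ : 2 * p - 1 = 2 * t + 1 + 2 * (2 * (6 * t + 4 - (2 * t + 1)) - (3 * t + 2)))%N;
  last by lia.
rewrite coef_quartic_exp; try lia.
by rewrite (_ : 6 * t + 4 - (2 * t + 1) = 4 * t + 3)%N; last by lia.
Qed.

Lemma c2E : c2 p = d2 p *+ 'C(6 * t + 4, 2 * t + 1).
Proof.
rewrite /c2 d2E (_ : 2 * p - 1 = 3 * (4 * t + 3))%N; last by lia.
rewrite {1}(_ : p - 1 = 2 * (3 * t + 2))%N; last by lia.
rewrite (_ : p - 1 = 6 * t + 4)%N; last by lia.
rewrite (_ : p - 2 = 4 * t + 3 + 2 * (2 * (6 * t + 4 - (4 * t + 3)) - (3 * t + 2)))%N;
  last by lia.
rewrite coef_quartic_exp; try lia.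
rewrite -bin_sub; last by lia.
by rewrite (_ : 6 * t + 4 - (4 * t + 3) = 2 * t + 1)%N; last by lia.
Qed.

Hypothesis p_prime : prime p.

Lemma Fp_bin_predp_third : 'C(6 * t + 4, 2 * t + 1)%:R = -1 :> 'F_p.
Proof.
rewrite (_ : 6 * t + 4 = p.-1)%N ?Fp_bin_predp; try lia.
by rewrite addn1 exprS exprM sqrrN expr1n expr1n mulr1.
Qed.

Lemma c1_opp : c1 p = - d1 p.
Proof. by rewrite c1E -scaler_nat Fp_bin_predp_third scaleN1r. Qed.

Lemma c2_opp : c2 p = - d2 p.
Proof. by rewrite c2E -scaler_nat Fp_bin_predp_third scaleN1r. Qed.

Lemma size_d1 : size (d1 p) = (3 * t + 2).+1.
Proof.
rewrite d1E; apply: size_poly_top.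
  by rewrite (leq_trans (size_trinom_coef_X _ _ _)) // ltnS geq_minl.
rewrite (@coef_trinom_coef_X_even _ _ _ _ (3 * t + 2)) ?subnn ?bin0 ?muln1; try lia.
by rewrite Fp_bin_neq0 //; lia.
Qed.

Lemma size_d2 : size (d2 p) = t.+1.
Proof.
rewrite d2E; apply: size_poly_top.
  by rewrite (leq_trans (size_trinom_coef_X _ _ _)) // ltnS geq_min; lia.
rewrite (@coef_trinom_coef_X_even _ _ _ _ (2 * t + 1)) ?binn ?mul1n; try lia.
by rewrite Fp_bin_neq0 //; lia.
Qed.

Lemma d2_even : ~~ odd t ->
  (exists q : {poly 'F_p}, d2 p = q \Po 'X ^+ 2) /\ (d2 p)`_0 != 0.
Proof.
rewrite -dvdn2 => /dvdnP [s ts]; split.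
  exists (even_poly (d2 p)); rewrite -{1}(poly_even_odd (d2 p)) d2E.
  by rewrite odd_poly_trinom_coef_X ?comp_poly0 ?mul0r ?addr0 // -dvdn2; lia.
rewrite d2E (@coef_trinom_coef_X_even _ _ _ _ (3 * s + 1)); try lia.
by rewrite natrM mulf_neq0 ?Fp_bin_neq0 //; lia.
Qed.

Lemma d2_odd : odd t ->
  exists q : {poly 'F_p}, d2 p = 'X * (q \Po 'X ^+ 2) /\ q`_0 != 0.
Proof.
rewrite -[odd t]negbK -dvdn2 => odd_t.
have [s ts] : exists s, t = (2 * s + 1)%N by exists (t %/ 2)%N; lia.
exists (odd_poly (d2 p)); split.
  rewrite -{1}(poly_even_odd (d2 p)) d2E.
  rewrite even_poly_trinom_coef_X ?comp_poly0 ?add0r 1?mulrC //.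
  by rewrite -[odd _]negbK -dvdn2; lia.
rewrite coef_odd_poly d2E (@coef_trinom_coef_X_even _ _ _ _ (3 * s + 3)); try lia.
by rewrite natrM mulf_neq0 ?Fp_bin_neq0 //; lia.
Qed.

Lemma d1_alpha_beta (A : comAlgType 'F_p) (a b : A) : a * b = 1 ->
  (map_poly (in_alg A) (d1 p)).[a + b]
  = (a * b) ^+ (t + 1) * bsum (4 * t + 3) (3 * t + 2) a b.
Proof.
move=> ab1; rewrite d1E -horner_evalE !rmorph_trinom_coef /= map_polyX rmorph1.
rewrite !horner_evalE hornerX hornerC -ab1 trinom_coef_factor binom_pair_sum_le; last by lia.
by rewrite (_ : 4 * t + 3 - (3 * t + 2) = t + 1)%N; last by lia.
Qed.

Lemma d2_alpha_beta (A : comAlgType 'F_p) (a b : A) : a * b = 1 ->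
  (map_poly (in_alg A) (d2 p)).[a + b] = bsum (2 * t + 1) t a b.
Proof.
move=> ab1; rewrite d2E -horner_evalE !rmorph_trinom_coef /= map_polyX rmorph1.
rewrite !horner_evalE hornerX hornerC -ab1 trinom_coef_factor.
by rewrite (_ : 3 * t + 2 = 2 * (2 * t + 1) - t)%N ?binom_pair_sum_ge //; lia.
Qed.

Lemma d2_dvd_d1 : d2 p %| d1 p.
Proof.
pose y := trinom_disc ^+ t.+1 * d2 p.
have Ld1 : gegenbauer_op (4 * t + 3) (3 * t + 2) (d1 p) = 0.
  by rewrite d1E gegenbauer_op_trinom_coef.
have Ld2 : gegenbauer_op (2 * t + 1) (3 * t + 2) (d2 p) = 0.
  by rewrite d2E gegenbauer_op_trinom_coef.
have Ly : gegenbauer_op (4 * t + 3) (3 * t + 2) y = 0.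
  have := gegenbauer_op_conj (2 * t + 1) t (d2 p).
  rewrite (_ : 2 * t + 1 + 2 * t.+1 = 4 * t + 3)%N; last by lia.
  rewrite (_ : 2 * t + 1 + t.+1 = 3 * t + 2)%N; last by lia.
  rewrite (_ : 8 * t.+1 * (2 * (2 * t + 1) + 2 * t + 3) = 8 * t.+1 * p)%N; last by lia.
  by rewrite Ld2 -scaler_nat natrM pchar_Fp_0 // !(mulr0, scale0r, addr0).
have size_y : size y = (3 * t + 2).+1.
  rewrite /y mulrC size_Mmonic ?monic_exp ?trinom_disc_monic //; last first.
    by rewrite -size_poly_eq0 size_d2.
  by rewrite size_d2 size_trinom_disc_exp; lia.
have yh : y`_(3 * t + 2) = lead_coef (d2 p).
  have -> : (3 * t + 2 = (size y).-1)%N by rewrite size_y.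
  by rewrite -lead_coefE /y mulrC lead_coef_Mmonic ?monic_exp ?trinom_disc_monic.
have recurrence_unit j : (j < 3 * t + 2)%N ->
    ((3 * t + 2 - j) * (2 * (4 * t + 3) - (3 * t + 2) - j))%:R != 0 :> 'F_p.
  by move=> lt_j; rewrite natrM mulf_neq0 // Fp_natr_neq0 //; lia.
rewrite (gegenbauer_op_kernel recurrence_unit Ld1 Ly) ?size_d1 ?size_y //.
  by rewrite /y scalerAl dvdp_mulIr.
by rewrite yh lead_coef_eq0 -size_poly_eq0 size_d2.
Qed.

End ResidueFiveModSix.

Theorem proposition3p2 (p : nat) (hp : prime p) (hp6 : (p %% 6 = 5)%N) :
  (* the stated relations d_i = C(p-1,(p-2)/3) c_i *)
  (d1 p = ('C(p - 1, (p - 2) %/ 3)%:R : 'F_p) *: c1 p /\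
   d2 p = ('C(p - 1, (p - 2) %/ 3)%:R : 'F_p) *: c2 p) /\
  (* part 1 *)
  (((p %% 12 = 5)%N ->
      (exists q : {poly 'F_p}, d2 p = q \Po 'X ^+ 2) /\ (d2 p)`_0 != 0) /\
   ((p %% 12 = 11)%N ->
      exists q : {poly 'F_p}, d2 p = 'X * (q \Po 'X ^+ 2) /\ q`_0 != 0)) /\
  (* part 2 *)
  ((forall (A : comAlgType 'F_p) (a b : A), a * b = 1 ->
      (map_poly (in_alg A) (d1 p)).[a + b]
        = (a * b) ^+ ((p + 1) %/ 6) * bsum ((2 * p - 1) %/ 3) ((p - 1) %/ 2) a b
   /\ (map_poly (in_alg A) (d2 p)).[a + b]
        = bsum ((p - 2) %/ 3) ((p - 5) %/ 6) a b) /\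
   ~~ (('X%:P * 'X) %| bsum ((2 * p - 1) %/ 3) ((p - 1) %/ 2)
                          (('X : {poly 'F_p})%:P) ('X : {poly {poly 'F_p}})) /\
   ~~ (('X%:P * 'X) %| bsum ((p - 2) %/ 3) ((p - 5) %/ 6)
                          (('X : {poly 'F_p})%:P) ('X : {poly {poly 'F_p}})) /\
   size (c1 p) = (((p - 1) %/ 2).+1)%N /\ size (d1 p) = (((p - 1) %/ 2).+1)%N /\
   size (c2 p) = (((p - 5) %/ 6).+1)%N /\ size (d2 p) = (((p - 5) %/ 6).+1)%N) /\
  (* part 3 *)
  (c2 p %| c1 p /\ d2 p %| d1 p).
Proof.
have [t def_p] : exists t, p = (6 * t + 5)%N by exists (p %/ 6)%N; lia.
subst p.
rewrite (_ : 6 * t + 5 - 1 = 6 * t + 4)%N; last by lia.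
rewrite (_ : (6 * t + 5 - 2) %/ 3 = 2 * t + 1)%N; last by lia.
rewrite (_ : (6 * t + 5 + 1) %/ 6 = t + 1)%N; last by lia.
rewrite (_ : (2 * (6 * t + 5) - 1) %/ 3 = 4 * t + 3)%N; last by lia.
rewrite (_ : (6 * t + 4) %/ 2 = 3 * t + 2)%N; last by lia.
rewrite (_ : (6 * t + 5 - 5) %/ 6 = t)%N; last by lia.
rewrite (c1_opp hp) (c2_opp hp) (Fp_bin_predp_third hp) !scaleN1r !opprK !size_polyN.
rewrite (size_d1 hp) (size_d2 hp) dvdpNl dvdpNr (d2_dvd_d1 hp).
split; first by [].
split; first split => p12.
- by apply: d2_even => //; rewrite -dvdn2; lia.
- by apply: d2_odd => //; rewrite -[odd t]negbK -dvdn2; lia.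
split; last by [].
split; first by move=> A a b ab1; rewrite d1_alpha_beta ?d2_alpha_beta.
by rewrite !Fp_bsum_ndvdX //; lia.
Qed.
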